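(* Let $p$ be a prime and $d,\ell$ positive integers. Then \[ \Gamma(d,p,\ell)=\{\operatorname{CT}(\lambda(M,w)): M\in\operatorname{CGL}_d(p)^{(\ell)},\ w\in\mathbb{F}_p^d\}. \]
   Context: Vectors in $\mathbb{F}_p^d$ are row vectors; for a $(d\times d)$-matrix $M$ over $\mathbb{F}_p$ and $v\in\mathbb{F}_p^d$, $\lambda(M,v)$ is the map $x\mapsto xM+v$ on $\mathbb{F}_p^d$. $\operatorname{AGL}_d(p)=\{\lambda(M,v):M\in\operatorname{GL}_d(p),v\in\mathbb{F}_p^d\}$. $\operatorname{CGL}_d(p)$ is the set of $A\in\operatorname{GL}_d(p)$ without eigenvalue $-1$, $\operatorname{ACGL}_d(p)=\{\lambda(A,v):A\in\operatorname{CGL}_d(p),v\in\mathbb{F}_p^d\}$, and $\operatorname{CGL}_d(p)^{(\ell)}=\{A_1\cdots A_\ell:A_i\in\operatorname{CGL}_d(p)\}$. The cycle type $\operatorname{CT}(\sigma)$ of a permutation $\sigma$ of a finite set $\Omega$ is the monomial $x_1^{k_1}\cdots x_{|\Omega|}^{k_{|\Omega|}}\in\mathbb{Q}[x_n:n\ge1]$ with $k_j$ the number of $j$-cycles of $\sigma$, and $\operatorname{CT}(X)=\{\operatorname{CT}(\sigma):\sigma\in X\}$. Define \[ \Gamma(d,p,\ell)=\begin{cases}\operatorname{CT}(\operatorname{ACGL}_d(p)), & \ell=1,\\ \operatorname{CT}(\operatorname{AGL}_d(p)), & \ell\geq2,\ (d,p)\notin\{(1,2),(1,3),(2,2)\},\\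 \emptyset, & \ell\geq2,\ (d,p)=(1,2),\\ \{x_1^3,x_3\}, & \ell\ge2,\ (d,p)=(1,3),\\ \{x_1^4,x_2^2,x_1x_3\}, & \ell\geq 2,\ (d,p)=(2,2).\end{cases} \] *)

From HB Require Import structures.
From mathcomp Require Import all_boot all_order all_algebra.
Set Implicit Arguments. Unset Strict Implicit. Unset Printing Implicit Defensive.
Import GRing.Theory.
Local Open Scope ring_scope.

Definition aff (p d : nat) (M : 'M['F_p]_d) (v : 'rV['F_p]_d) :
  'rV['F_p]_d -> 'rV['F_p]_d := fun x => x *m M + v.

Definition cycle_count (T : finType) (f : T -> T) (j : nat) : nat :=
  #|[set [set y | fconnect f x y] | x : T & order f x == j]|.

(* Cycle type x_1^{k_1} ... x_{|T|}^{k_{|T|}}, represented by its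
   exponent vector [:: k_1; ...; k_{|T|}]. *)
Definition CT (T : finType) (f : T -> T) : seq nat :=
  [seq cycle_count f j | j <- iota 1 #|T|].

Definition CGL (p d : nat) : pred 'M['F_p]_d :=
  [pred A | (A \in unitmx) && ~~ eigenvalue A (-1)].

Definition CGLpow (p d l : nat) (M : 'M['F_p]_d) : Prop :=
  exists s : seq 'M['F_p]_d,
    [/\ size s = l, all (@CGL p d) s & M = foldr (fun A B => A *m B) 1%:M s].

Definition Gamma (d p l : nat) (c : seq nat) : Prop :=
  if l == 1%N then
    exists (A : 'M['F_p]_d) (v : 'rV['F_p]_d), A \in @CGL p d /\ c = CT (aff A v)
  else if (d, p) == (1, 2)%N then False
  else if (d, p) == (1, 3)%N then c = [:: 3; 0; 0]%N \/ c = [:: 0; 0; 1]%N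
  else if (d, p) == (2, 2)%N then
    [\/ c = [:: 4; 0; 0; 0]%N, c = [:: 0; 2; 0; 0]%N | c = [:: 1; 0; 1; 0]%N]
  else exists (M : 'M['F_p]_d) (v : 'rV['F_p]_d), M \in unitmx /\ c = CT (aff M v).

From HB Require Import structures.
From mathcomp Require Import all_boot all_order all_algebra.
Set Implicit Arguments. Unset Strict Implicit. Unset Printing Implicit Defensive.
Import GRing.Theory.
Local Open Scope ring_scope.

(* Call K a [cgl_shift] if X + K is invertible for some X in CGL, i.e. with X and
   X + 1 invertible. For invertible M this says M = X (X^-1 M) with both factors in
   CGL, as X^-1 M + 1 = X^-1 (M + X); writing M = C (C^-1 M) with C in CGL then puts
   every invertible matrix in CGL^(l) for all l >= 2. So outside the exceptional cases
   CGL^(l) = GL_d(p), and it suffices to show that every matrix is a cgl_shift.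
   This property passes to block matrices whose diagonal blocks have it (the witness
   is block lower triangular), and it is invariant under transposition and
   conjugation. For p = 3 the 2 x 2 case is
   checked by computation, and a Schur complement argument handles the splitting
   3 = 2 + 1, except for -1, which needs a witness without eigenvalues in F_3. For
   p = 2 the 3 x 3 case is checked by computation, and a 2 x 2 diagonal block is
   handled through its trace: a 2 x 2 matrix over F_2 of trace 1 is a cgl_shift, and
   conjugating by a block unitriangular matrix can bring the trace to 1.
   In the exceptional cases CGL_1(2) is empty, CGL_1(3) = {1} and CGL_2(2) = {C, C + 1}
   with C^2 = C + 1, and the cycle types are computed directly. *)

Section CglShift.
Variable F : fieldType.

Definition cglmx n (X : 'M[F]_n) : bool := (X \in unitmx) && (X + 1%:M \in unitmx).

Definition cgl_shift n (K : 'M[F]_n) : Prop := exists2 X, cglmx X & X + K \in unitmx.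

Lemma cglmx_tr n (X : 'M[F]_n) : cglmx X^T = cglmx X.
Proof.
rewrite /cglmx; have -> : X^T + 1%:M = (X + 1%:M)^T by rewrite linearD /= trmx1.
by rewrite !unitmx_tr.
Qed.

Lemma cgl_shift_tr n (K : 'M[F]_n) : cgl_shift K^T -> cgl_shift K.
Proof.
by case=> X cX uXK; exists X^T; rewrite ?cglmx_tr // -[K]trmxK -linearD /= unitmx_tr.
Qed.

Lemma cgl_shift_conj n (g h K : 'M[F]_n) :
  h *m g = 1%:M -> cgl_shift (g *m K *m h) -> cgl_shift K.
Proof.
move=> hg [X /andP[uX uX1] uXK]; have [uh ug] := mulmx1_unit hg.
have unit_conj Y : Y \in unitmx -> h *m Y *m g \in unitmx by move=> uY; rewrite !unitmx_mul uh uY.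
exists (h *m X *m g).
  apply/andP; split; first exact: unit_conj.
  by rewrite -[1%:M]hg -{2}[h]mulmx1 -mulmxDl -mulmxDr; apply: unit_conj.
have -> : K = h *m (g *m K *m h) *m g by rewrite !mulmxA hg mul1mx -mulmxA hg mulmx1.
by rewrite -mulmxDl -mulmxDr; apply: unit_conj.
Qed.

Lemma cgl_shift_schur m k (K1 : 'M[F]_m) R C (B : 'M[F]_k) X1 W :
  cglmx X1 -> X1 + K1 \in unitmx -> cgl_shift (B - W *m R) -> cgl_shift (block_mx K1 R C B).
Proof.
move=> /andP[u1 u2] u3 [Y /andP[v1 v2] v3].
(* Left multiplication by [1 0; -W 1] turns X + K into [X1 + K1, R; 0, Y + B - W R]. *)
exists (block_mx X1 0 (W *m (X1 + K1) - C) Y).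
  by rewrite /cglmx (scalar_mx_block m k) add_block_mx addr0 !unitmxE !det_lblock !unitrM
    -!unitmxE u1 u2 v1 v2.
set L := block_mx 1%:M 0 (- W) 1%:M.
have uL : L \in unitmx by rewrite unitmxE det_lblock !det1 mulr1 unitr1.
suff : L *m (block_mx X1 0 (W *m (X1 + K1) - C) Y + block_mx K1 R C B) \in unitmx.
  by rewrite unitmx_mul => /andP[].
rewrite add_block_mx mulmx_block !mul1mx !mul0mx !add0r addr0 subrK mulNmx addNr.
by rewrite unitmxE det_ublock unitrM -!unitmxE u3 mulNmx addrC -addrA.
Qed.

Lemma cgl_shift_block m k (K1 : 'M[F]_m) R C (B : 'M[F]_k) :
  cgl_shift K1 -> cgl_shift B -> cgl_shift (block_mx K1 R C B).
Proof.
by case=> X1 cX1 uX1 sB; apply: (cgl_shift_schur C cX1 uX1 (W := 0)); rewrite mul0mx subr0.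
Qed.

Lemma cgl_shift_add m k :
  (forall K : 'M[F]_m, cgl_shift K) -> (forall K : 'M[F]_k, cgl_shift K) ->
  forall K : 'M[F]_(m + k), cgl_shift K.
Proof. by move=> sm sk K; rewrite -[K]submxK; apply: cgl_shift_block. Qed.

Lemma scalar_mx_unit n (a : F) : a != 0 -> (a%:M : 'M[F]_n) \in unitmx.
Proof. by move=> a0; rewrite unitmxE det_scalar unitrX ?unitfE. Qed.

Lemma cgl_shift_scalar n (c : F) :
  2%:R != 0 :> F -> 1 + c != 0 -> cgl_shift (c%:M : 'M[F]_n).
Proof.
move=> two0 c1; exists 1%:M; last by rewrite -raddfD /= scalar_mx_unit.
by rewrite /cglmx -raddfD /= !scalar_mx_unit ?oner_neq0.
Qed.

Lemma mxtrace_mul_surj m k (R : 'M[F]_(m, k)) (t : F) :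
  R != 0 -> exists W : 'M[F]_(k, m), \tr (W *m R) = t.
Proof.
rewrite matrix_eq0 => /forallPn[i /forallPn[j /negbTE Rij]].
exists ((t / R i j) *: delta_mx j i); rewrite -scalemxAl mxtraceZ.
rewrite /mxtrace (bigD1 j) //= big1 => [|l /negbTE jl]; rewrite !mxE.
  rewrite (bigD1 i) //= big1 => [|l /negbTE li]; last by rewrite !mxE li andbF mul0r.
  by rewrite !mxE !eqxx mul1r !addr0 divfK ?Rij.
by rewrite big1 // => l' _; rewrite mxE jl mul0r.
Qed.

Lemma conj_block_upper m k (E : 'M[F]_(m, k)) K1 R C B :
  block_mx 1%:M E 0 1%:M *m block_mx K1 R C B *m block_mx 1%:M (- E) 0 1%:M =
  block_mx (K1 + E *m C) (R + E *m B - (K1 + E *m C) *m E) C (B - C *m E).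
Proof.
by rewrite !mulmx_block !mul1mx !mul0mx !mulmx1 !mulmx0 !add0r !addr0 !mulmxN !(addrC (- _)).
Qed.

Lemma cgl_shift_conj_upper m k (E : 'M[F]_(m, k)) K1 R C B :
  cgl_shift (block_mx (K1 + E *m C) (R + E *m B - (K1 + E *m C) *m E) C (B - C *m E)) ->
  cgl_shift (block_mx K1 R C B).
Proof.
rewrite -conj_block_upper; apply: cgl_shift_conj.
by rewrite mulmx_block !mul1mx !mul0mx !mulmx1 !mulmx0 !add0r addr0 subrr -scalar_mx_block.
Qed.

(* When R = C = 0 and B is not a cgl_shift, the conjugation by [1 E; 0 1] creates the
   nonzero upper right block E B - K1 E. *)
Lemma cgl_shift_corner m k (K1 : 'M[F]_m) R C (B : 'M[F]_k) :
  (forall (B' : 'M[F]_k) (R' : 'M[F]_(m, k)), R' != 0 -> exists W, cgl_shift (B' - W *m R')) ->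
  cgl_shift K1 ->
  (R = 0 -> C = 0 -> cgl_shift B \/ exists E, E *m B != K1 *m E) ->
  cgl_shift (block_mx K1 R C B).
Proof.
move=> corner [X1 cX1 uX1] diag_case.
have R_case R' C' : R' != 0 -> cgl_shift (block_mx K1 R' C' B).
  by move=> /(corner B) [W sW]; apply: cgl_shift_schur cX1 uX1 sW.
have [R0|] := eqVneq R 0; last exact: R_case.
have [C0|C_nz] := eqVneq C 0; last first.
  apply: cgl_shift_tr; rewrite tr_block_mx.
  have [W sW] : exists W, cgl_shift (B^T - W *m C^T) by apply: corner; rewrite trmx_eq0.
  by apply: (cgl_shift_schur _ (X1 := X1^T) _ _ sW); rewrite ?cglmx_tr // -linearD /= unitmx_tr.
have [sB|[E nE]] := diag_case R0 C0.
  by rewrite R0 C0; apply: cgl_shift_block => //; exists X1.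
rewrite R0 C0; apply: (cgl_shift_conj_upper (E := E)); rewrite !mul0mx mulmx0 addr0 subr0 add0r.
by apply: R_case; rewrite subr_eq0.
Qed.

End CglShift.

Lemma intertwiner_scalar (R : pzRingType) m k (A : 'M[R]_m) (B : 'M[R]_k) (i : 'I_m) (j : 'I_k) :
  (forall E : 'M_(m, k), E *m B = A *m E) -> A = (B j j)%:M /\ B = (A i i)%:M.
Proof.
have delta_mulE m' n p (a : 'I_m') (b : 'I_n) (M : 'M[R]_(n, p)) r c :
    (delta_mx a b *m M) r c = (r == a)%:R * M b c.
  rewrite mxE (bigD1 b) //= big1 => [|l /negbTE lb]; last by rewrite mxE lb andbF mul0r.
  by rewrite mxE eqxx andbT addr0.
have mul_deltaE m' n p (M : 'M[R]_(m', n)) (a : 'I_n) (b : 'I_p) r c :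
    (M *m delta_mx a b) r c = M r a * (c == b)%:R.
  rewrite mxE (bigD1 a) //= big1 => [|l /negbTE la]; last by rewrite mxE la mulr0.
  by rewrite mxE eqxx addr0.
move=> intw; split; apply/matrixP => r c; rewrite mxE.
- have := congr1 (fun M : 'M[R]_(m, k) => M r j) (intw (delta_mx c j)).
  by rewrite delta_mulE mul_deltaE eqxx mulr1 mulr_natl => <-.
- have := congr1 (fun M : 'M[R]_(m, k) => M i c) (intw (delta_mx i r)).
  by rewrite delta_mulE mul_deltaE eqxx mul1r mulr_natr eq_sym.
Qed.

Definition sumL (R : nmodType) (F : nat -> R) n := foldr (fun j s => F j + s) 0 (iota 0 n).

Lemma sumLE (R : nmodType) (F : nat -> R) n : sumL F n = \sum_(j < n) F j.
Proof.
rewrite /sumL -(big_mkord xpredT) /index_iota subn0.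
by elim: (iota 0 n) => [|j s IH]; rewrite ?big_nil ?big_cons /= ?IH.
Qed.

(* Laplace expansion along the first row; unlike \det it evaluates under vm_compute. *)
Fixpoint detL (R : pzRingType) n (a : nat -> nat -> R) : R :=
  if n is n'.+1 then sumL (fun j => (-1) ^+ j * a 0%N j * detL n' (fun r c => a r.+1 (bump j c))) n
  else 1.

Lemma det_mx_fun (R : comPzRingType) n (a : nat -> nat -> R) :
  \det (\matrix_(i < n, j < n) a i j) = detL n a.
Proof.
elim: n a => [|n IH] a; first by rewrite det_mx00.
rewrite (expand_det_row _ ord0) /= sumLE; apply: eq_bigr => j _.
rewrite /cofactor -IH mxE add0n mulrCA mulrA; congr (_ * \det _).
by apply/matrixP => r c; rewrite !mxE.
Qed.

Lemma detL_rmorph (R S : pzRingType) (f : {rmorphism R -> S}) n a :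
  f (detL n a) = detL n (fun i j => f (a i j)).
Proof.
elim: n a => [|n IH] a /=; first exact: rmorph1.
rewrite !sumLE rmorph_sum; apply: eq_bigr => j _.
by rewrite !rmorphM rmorphXn rmorphN1 IH.
Qed.

Definition positions n := [seq (i, j) | i <- iota 0 n, j <- iota 0 n].

Fixpoint nat_funs (vals : seq nat) (ps : seq (nat * nat)) : seq (nat -> nat -> nat) :=
  if ps is (i, j) :: ps' then
    [seq (fun r c => if (r == i) && (c == j) then x else f r c) | x <- vals, f <- nat_funs vals ps']
  else [:: fun _ _ => 0%N].

Lemma all_nat_funs (P : (nat -> nat -> nat) -> bool) vals ps (g : nat -> nat -> nat) :
  all P (nat_funs vals ps) -> (forall i j, (i, j) \in ps -> g i j \in vals) ->
  exists2 f, P f & forall i j, (i, j) \in ps -> f i j = g i j.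
Proof.
elim: ps P => [|[i j] ps IH] P /=; first by rewrite andbT => Pf _; exists (fun _ _ => 0%N).
pose upd x (f : nat -> nat -> nat) r c := if (r == i) && (c == j) then x else f r c.
move=> allP gv; have gij : g i j \in vals by apply: gv; rewrite mem_head.
have sub (xs : seq nat) : all P [seq upd x f | x <- xs, f <- nat_funs vals ps] ->
    g i j \in xs -> all (fun f => P (upd (g i j) f)) (nat_funs vals ps).
  elim: xs => //= x xs IHx; rewrite all_cat all_map.
  by case/andP=> Px Pxs; rewrite inE => /predU1P[-> // | /(IHx Pxs)].
case/IH: (sub vals allP gij) => [a b ab | f Pf fg]; first by apply: gv; rewrite inE ab orbT.
exists (upd (g i j) f) => // a b; rewrite inE /upd.
case: ifP => [/andP[/eqP-> /eqP->] // | nab /predU1P[[ai bj] | /fg //]].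
by rewrite ai bj !eqxx in nab.
Qed.

Section NatMatrices.
Variable p : nat.
Hypothesis p_pr : prime p.

Definition nat_mx n (a : nat -> nat -> nat) : 'M['F_p]_n := \matrix_(i, j) (a i j)%:R.

Definition unitb n (a : nat -> nat -> nat) : bool :=
  ~~ (p %| detL n (fun i j => (a i j)%:Z))%Z.

Definition addf (a b : nat -> nat -> nat) i j := (a i j + b i j)%N.

Definition idf (i j : nat) : nat := i == j.

Definition cglb n (a : nat -> nat -> nat) := unitb n a && unitb n (addf a idf).

Lemma nat_mx_unit n a : (nat_mx n a \in unitmx) = unitb n a.
Proof.
rewrite unitmxE unitfE (det_mx_fun n (fun i j => (a i j)%:R)) /unitb.
by rewrite (dvdz_pcharf (pchar_Fp p_pr)) detL_rmorph.
Qed.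

Lemma nat_mxD n a b : nat_mx n (addf a b) = nat_mx n a + nat_mx n b.
Proof. by apply/matrixP => i j; rewrite !mxE natrD. Qed.

Lemma nat_mx1 n : nat_mx n idf = 1%:M.
Proof. by apply/matrixP => i j; rewrite !mxE. Qed.

Lemma nat_mx_cgl n a : cglmx (nat_mx n a) = cglb n a.
Proof. by rewrite /cglmx /cglb -nat_mx1 -nat_mxD !nat_mx_unit. Qed.

Lemma cgl_shift_nat_mx n x k :
  cglb n x -> unitb n (addf x k) -> cgl_shift (nat_mx n k).
Proof. by rewrite -nat_mx_cgl -nat_mx_unit nat_mxD; exists (nat_mx n x). Qed.

Lemma nat_mx_cover (P : (nat -> nat -> nat) -> bool) n :
  all P (nat_funs (iota 0 p) (positions n)) ->
  forall K : 'M['F_p]_n, exists2 a, P a & K = nat_mx n a.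
Proof.
move=> allP K.
pose g i j := oapp (fun i' => oapp (fun j' => val (K i' j')) 0%N (insub j)) 0%N (insub i).
have gK (i j : 'I_n) : g i j = K i j by rewrite /g !valK.
have [|a Pa ag] := all_nat_funs allP (g := g).
  move=> i j /allpairsP[[i' j'] /= []]; rewrite !mem_iota !add0n /= => i_n j_n [-> ->].
  rewrite -[i']/(val (Ordinal i_n)) -[j']/(val (Ordinal j_n)) gK.
  by rewrite -[X in (_ < X)%N](Fp_cast p_pr).
exists a => //; apply/matrixP => i j; rewrite mxE ag ?gK ?natr_Zp //.
by apply/allpairsP; exists (val i, val j); rewrite !mem_iota /=.
Qed.

Lemma nat_mx_eq n a b :
  all (fun ij => a ij.1 ij.2 == b ij.1 ij.2) (positions n) -> nat_mx n a = nat_mx n b.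
Proof.
move/allP=> ab; apply/matrixP => i j; rewrite !mxE (eqP (ab (val i, val j) _)) //.
by apply/allpairsP; exists (val i, val j); rewrite !mem_iota /= !ltn_ord.
Qed.

Definition cgl_shift_allb n :=
  let cands := [seq x <- nat_funs (iota 0 p) (positions n) | cglb n x] in
  all (fun k => has (fun x => unitb n (addf x k)) cands) (nat_funs (iota 0 p) (positions n)).

Lemma cgl_shift_allbP n : cgl_shift_allb n -> forall K : 'M['F_p]_n, cgl_shift K.
Proof.
move=> /nat_mx_cover cover K; have [k hk ->] := cover K.
set cands := filter _ _ in hk; have := nth_find idf hk.
have : cglb n (nth idf cands (find (fun x => unitb n (addf x k)) cands)).
  by apply: (all_nthP _ (filter_all _ _)); rewrite -has_find.
exact: cgl_shift_nat_mx.
Qed.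

End NatMatrices.


Lemma det_mx22 (R : comPzRingType) (A : 'M[R]_2) : \det A = A 0 0 * A 1 1 - A 0 1 * A 1 0.
Proof.
transitivity (detL 2 (fun i j => A (inord i) (inord j))).
  by rewrite -det_mx_fun; congr (\det _); apply/matrixP => i j; rewrite mxE !inord_val.
have i0 : inord 0 = 0 :> 'I_2 := inord_val 0.
have i1 : inord 1 = 1 :> 'I_2 := inord_val 1.
by rewrite /= /sumL /bump /= i0 i1 expr0 expr1 !mul1r !mulr1 !addr0 mulN1r mulNr.
Qed.

Lemma det_add1_mx22 (R : comPzRingType) (A : 'M[R]_2) : \det (A + 1%:M) = \det A + \tr A + 1.
Proof.
rewrite !det_mx22 /mxtrace !big_ord_recl big_ord0 !mxE /=.
have -> : lift ord0 ord0 = 1 :> 'I_2 by apply: val_inj.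
by rewrite !addr0 !mulrDl !mulrDr !mul1r !mulr1 -!addrA; congr (_ + _); rewrite [RHS]addrC -!addrA.
Qed.

Lemma nat_ind2 (P : nat -> Prop) n0 :
  P n0 -> P n0.+1 -> (forall n, (n0 <= n)%N -> P n -> P (n + 2)%N) ->
  forall n, (n0 <= n)%N -> P n.
Proof.
move=> P0 P1 step; suff Pk k : P (n0 + k)%N /\ P (n0 + k).+1.
  by move=> n /subnKC <-; case: (Pk (n - n0)%N).
elim: k => [|k [Pk Pk1]]; first by rewrite addn0.
by rewrite addnS -addn2; split=> //; apply: step; rewrite ?leq_addr.
Qed.

Lemma F2_cases (x : 'F_2) : x = 0 \/ x = 1.
Proof. by case: x => [[|[|//]] ?]; [left | right]; apply: val_inj. Qed.

Lemma addmx_F2 m n (X : 'M['F_2]_(m, n)) : X + X = 0.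
Proof. by apply/matrixP => i j; rewrite !mxE (addrr_pchar2 (pchar_Fp (isT : prime 2))). Qed.

Definition C2 : 'M['F_2]_2 := nat_mx 2 2 (fun i j => i + j != 0)%N.

Lemma C2_sqr : C2 *m C2 = C2 + 1%:M.
Proof.
apply/matrixP => i j; rewrite !mxE !big_ord_recl big_ord0 !mxE.
by case: i j => [[|[|//]] ?] [[|[|//]] ?]; apply/eqP.
Qed.

Lemma C2_mulC2D1 : C2 *m (C2 + 1%:M) = 1%:M.
Proof. by rewrite mulmxDr C2_sqr mulmx1 addrAC addmx_F2 add0r. Qed.

Lemma cglmx_C2 : cglmx C2.
Proof. by case: (mulmx1_unit C2_mulC2D1) => uC uC1; rewrite /cglmx uC uC1. Qed.

Lemma cglmx_C2D1 : cglmx (C2 + 1%:M).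
Proof.
by case: (mulmx1_unit C2_mulC2D1) => uC uC1; rewrite /cglmx uC1 -addrA addmx_F2 addr0 uC.
Qed.

Lemma mxtrace_C2 : \tr C2 = 1.
Proof. by rewrite /mxtrace !big_ord_recl big_ord0 !mxE; apply/eqP. Qed.

Lemma cgl_shift_F2_3 (K : 'M['F_2]_3) : cgl_shift K.
Proof. by apply: (cgl_shift_allbP (isT : prime 2)); vm_compute. Qed.

Lemma cgl_shift_F2_tr1 (K : 'M['F_2]_2) : \tr K = 1 -> cgl_shift K.
Proof.
(* det (C2 + K + 1) = det (C2 + K) + tr (C2 + K) + 1 = det (C2 + K) + 1 *)
move=> trK; have [uK | nuK] := boolP (C2 + K \in unitmx); first by exists C2; rewrite ?cglmx_C2.
exists (C2 + 1%:M); rewrite ?cglmx_C2D1 // addrAC unitmxE det_add1_mx22 mxtraceD trK mxtrace_C2.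
have [d0 | d1] := F2_cases (\det (C2 + K)); last by rewrite unitmxE d1 unitr1 in nuK.
by rewrite d0 add0r addrr_pchar2 ?(pchar_Fp (isT : prime 2)) // add0r unitr1.
Qed.

Lemma cgl_shift_F2_scalar (c : 'F_2) : cgl_shift (c%:M : 'M_2).
Proof.
have [uC uC1] := mulmx1_unit C2_mulC2D1.
have scalar0 : (0%:M : 'M['F_2]_2) = 0 by apply/matrixP => i j; rewrite !mxE mul0rn.
exists C2; first exact: cglmx_C2.
by case: (F2_cases c) => ->; [rewrite scalar0 addr0; exact: uC | exact: uC1].
Qed.

Lemma cgl_shift_F2_sub_mul m (B : 'M['F_2]_2) (R : 'M_(m, 2)) :
  R != 0 -> exists W, cgl_shift (B - W *m R).
Proof.
move=> /(mxtrace_mul_surj (\tr B - 1)) [W trW]; exists W.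
by apply: cgl_shift_F2_tr1; rewrite linearB /= trW subKr.
Qed.

Lemma cgl_shift_F2_block m (K1 : 'M['F_2]_m.+1) R C (B : 'M_2) :
  cgl_shift K1 -> cgl_shift (block_mx K1 R C B).
Proof.
move=> sK1; apply: cgl_shift_corner => // [|_ _]; first exact: cgl_shift_F2_sub_mul.
have [/forallP intw | /forallPn[E nE]] := boolP [forall E : 'M_(m.+1, 2), E *m B == K1 *m E].
  by left; have [_ ->] := intertwiner_scalar ord0 ord0 (fun E => eqP (intw E));
    apply: cgl_shift_F2_scalar.
by right; exists E.
Qed.

Lemma cgl_shift_F2_4 (K : 'M['F_2]_(2 + 2)) : cgl_shift K.
Proof.
(* A nonzero lower left block C lets a conjugation give the upper left block trace 1. *)
have C_case (K1 : 'M['F_2]_2) R C (B : 'M_2) : C != 0 -> cgl_shift (block_mx K1 R C B).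
  move=> /(mxtrace_mul_surj (1 - \tr K1)) [E trE]; apply: (cgl_shift_conj_upper (E := E)).
  by apply: cgl_shift_F2_block; apply: cgl_shift_F2_tr1; rewrite mxtraceD trE addrC subrK.
have R_case (K1 : 'M['F_2]_2) R C (B : 'M_2) : R != 0 -> cgl_shift (block_mx K1 R C B).
  by move=> R_nz; apply: cgl_shift_tr; rewrite tr_block_mx; apply: C_case; rewrite trmx_eq0.
rewrite -[K]submxK; have [R0 | /R_case //] := eqVneq (ursubmx K) 0.
have [C0 | /C_case //] := eqVneq (dlsubmx K) 0; rewrite R0 C0.
set K1 := ulsubmx K; set B := drsubmx K.
have [/forallP intw | /forallPn[E nE]] := boolP [forall E : 'M_2, E *m B == K1 *m E].
  have [-> _] := intertwiner_scalar ord0 ord0 (fun E => eqP (intw E)).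
  by apply: cgl_shift_F2_block; apply: cgl_shift_F2_scalar.
apply: (cgl_shift_conj_upper (E := E)); rewrite !mul0mx mulmx0 addr0 subr0 add0r.
by apply: R_case; rewrite subr_eq0.
Qed.

Lemma cgl_shift_F2 n : (2 < n)%N -> forall K : 'M['F_2]_n, cgl_shift K.
Proof.
move: n; apply: (nat_ind2 (P := fun n => forall K : 'M_n, cgl_shift K)).
- exact: cgl_shift_F2_3.
- exact: cgl_shift_F2_4.
- by case=> // n _ IH K; rewrite -[K]submxK; apply: cgl_shift_F2_block.
Qed.

Lemma cgl_shift_F3_2 (K : 'M['F_3]_2) : cgl_shift K.
Proof. by apply: (cgl_shift_allbP (isT : prime 3)); vm_compute. Qed.

Lemma cgl_shift_F3_neg1 : cgl_shift ((-1)%:M : 'M['F_3]_3).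
Proof.
have -> : (-1)%:M = nat_mx 3 3 (fun i j => 2 * (i == j))%N.
  apply/matrixP => i j; rewrite !mxE -[(i == j :> nat)]/(i == j).
  by case: (i == j); apply/eqP.
(* The companion matrix of x^3 - x - 1, which has no root in F_3. *)
by apply: (cgl_shift_nat_mx (isT : prime 3)
  (x := fun i j => (j == i.+1) || (i == 2) && (j < 2))%N); vm_compute.
Qed.

Lemma cgl_shift_F3_sub_mul m (b : 'M['F_3]_1) (R : 'M_(m, 1)) :
  R != 0 -> exists W, cgl_shift (b - W *m R).
Proof.
move=> /(mxtrace_mul_surj (b 0 0)) [W trW]; exists W.
rewrite [b - _]mx11_scalar -trace_mx11 linearB /= trW trace_mx11 subrr.
by apply: cgl_shift_scalar; apply/eqP.
Qed.

Lemma cgl_shift_F3_3 (K : 'M['F_3]_(2 + 1)) : cgl_shift K.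
Proof.
have [-> | ] := eqVneq K (-1)%:M; first exact: cgl_shift_F3_neg1.
rewrite -[K]submxK => K_neg1.
apply: cgl_shift_corner; [exact: cgl_shift_F3_sub_mul | exact: cgl_shift_F3_2 | move=> R0 C0].
set K1 := ulsubmx K in K_neg1 *; set b := drsubmx K in K_neg1 *.
have [b_neg1 | b1] := eqVneq (1 + b 0 0) 0.
  2: by left; rewrite [b]mx11_scalar; apply: cgl_shift_scalar.
right; have [/forallP intw | /forallPn[E nE]] := boolP [forall E : 'M_(2, 1), E *m b == K1 *m E].
  have [K1E _] := intertwiner_scalar 0 0 (fun E => eqP (intw E)).
  have bE : b 0 0 = -1 by apply/eqP; rewrite -addr_eq0 addrC b_neg1.
  by case/eqP: K_neg1; rewrite R0 C0 K1E bE [b]mx11_scalar bE -scalar_mx_block.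
by exists E.
Qed.

Lemma cgl_shift_F3 n : (1 < n)%N -> forall K : 'M['F_3]_n, cgl_shift K.
Proof.
move: n; apply: (nat_ind2 (P := fun n => forall K : 'M_n, cgl_shift K)).
- exact: cgl_shift_F3_2.
- exact: cgl_shift_F3_3.
- by move=> n _ IH; apply: cgl_shift_add IH cgl_shift_F3_2.
Qed.

Section LargePrime.
Variable p : nat.
Hypotheses (p_pr : prime p) (p_gt4 : (4 < p)%N).

Lemma natr_Fp_neq0 m : (0 < m < p)%N -> (m%:R : 'F_p) != 0.
Proof. by case/andP=> m0 mp; rewrite -(dvdn_pcharf (pchar_Fp p_pr)) gtnNdvd. Qed.

Lemma cgl_shift_large_1 (K : 'M['F_p]_1) : cgl_shift K.
Proof.
have lt_p m : (0 < m < 5)%N -> (m%:R : 'F_p) != 0.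
  by case/andP=> m0 m5; apply: natr_Fp_neq0; rewrite m0 (leq_trans m5).
rewrite [K]mx11_scalar; set k := K 0 0.
have [k_neg1 | k1] := eqVneq (1 + k) 0; last exact: cgl_shift_scalar (lt_p 2 isT) k1.
exists 2%:M; last by rewrite -raddfD /= -addrA k_neg1 addr0 scalar_mx_unit ?oner_neq0.
apply/andP; split; rewrite -?raddfD /= ?scalar_mx_unit //; first exact: (lt_p 2).
by rewrite -addrA; apply: (lt_p 3).
Qed.

Lemma cgl_shift_large n : (0 < n)%N -> forall K : 'M['F_p]_n, cgl_shift K.
Proof.
have shift2 : forall K : 'M['F_p]_(1 + 1), cgl_shift K.
  exact: cgl_shift_add cgl_shift_large_1 cgl_shift_large_1.
move: n; apply: (nat_ind2 (P := fun n => forall K : 'M_n, cgl_shift K)).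
- exact: cgl_shift_large_1.
- exact: shift2.
- by move=> n _ IH; apply: cgl_shift_add IH shift2.
Qed.

End LargePrime.

Lemma cgl_shift_nonexceptional p d :
  prime p -> (0 < d)%N -> (d, p) != (1, 2)%N -> (d, p) != (1, 3)%N -> (d, p) != (2, 2)%N ->
  forall K : 'M['F_p]_d, cgl_shift K.
Proof.
move=> p_pr d_gt0; have [p_gt4 _ _ _|] := ltnP 4 p; first exact: cgl_shift_large.
case: p p_pr => [|[|[|[|[|]]]]] // _ _; rewrite !xpair_eqE /=.
- by move=> d1 _ d2; apply: cgl_shift_F2; case: d d_gt0 d1 d2 => [|[|[|]]].
- by move=> _ d1 _; apply: cgl_shift_F3; case: d d_gt0 d1 => [|[|]].
Qed.

Section CGLProducts.
Variables p d : nat.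

Lemma CGLE (A : 'M['F_p]_d) : (A \in @CGL p d) = cglmx A.
Proof.
rewrite inE /= /eigenvalue /eigenspace negbK kermx_eq0 row_free_unit.
by rewrite -scalemx1 scaleN1r opprK.
Qed.

Lemma CGLpow_unit l (M : 'M['F_p]_d) : CGLpow l M -> M \in unitmx.
Proof.
case=> s [_ /allP cgl_s ->]; elim: s cgl_s => [|A s IH] cgl_s /=; first exact: unitmx1.
rewrite unitmx_mul IH => [|B sB]; last by apply: cgl_s; rewrite inE sB orbT.
by have /andP[-> _] : cglmx A by rewrite -CGLE; apply: cgl_s; apply: mem_head.
Qed.

Lemma CGLpow_cons l (A M : 'M['F_p]_d) : A \in @CGL p d -> CGLpow l M -> CGLpow l.+1 (A *m M).
Proof. by move=> cA [s [<- cs ->]]; exists (A :: s); rewrite /= cs andbT. Qed.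

Lemma CGLpow1 (A : 'M['F_p]_d) : CGLpow 1 A <-> A \in @CGL p d.
Proof.
split=> [[[|B [|? ?]] [] //= _ /andP[cB _] ->] | cA]; first by rewrite mulmx1.
by exists [:: A]; rewrite /= mulmx1 andbT.
Qed.

Lemma CGLpow2 (M : 'M['F_p]_d) : M \in unitmx -> cgl_shift M -> CGLpow 2 M.
Proof.
move=> uM [X cX uXM]; have uX : X \in unitmx by case/andP: cX.
rewrite -[M](mulKVmx uX); apply: CGLpow_cons; first by rewrite CGLE.
apply/CGLpow1; rewrite CGLE /cglmx unitmx_mul unitmx_inv uX uM.
by rewrite -(mulVmx uX) -mulmxDr unitmx_mul unitmx_inv uX addrC.
Qed.

Lemma CGLpow_of_unit l (M : 'M['F_p]_d) :
  (forall K : 'M['F_p]_d, cgl_shift K) -> (1 < l)%N -> M \in unitmx -> CGLpow l M.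
Proof.
move=> shift; have [C cC _] := shift 1%:M; have uC : C \in unitmx by case/andP: cC.
elim: l M => // l IH M l_gt1 uM.
have [-> | l_gt1'] := eqVneq l 1%N; first exact: CGLpow2.
rewrite -[M](mulKVmx uC); apply: CGLpow_cons; first by rewrite CGLE.
by apply: IH; rewrite ?unitmx_mul ?unitmx_inv ?uC // ltn_neqAle eq_sym l_gt1'.
Qed.

End CGLProducts.

Section CycleType.
Variables (T : finType) (f : T -> T).
Hypothesis f_inj : injective f.
Let symf : connect_sym (frel f) := fconnect_sym f_inj.

Lemma order_fconnect x y : fconnect f x y -> order f y = order f x.
Proof. by move=> xy; apply: eq_card => z; rewrite !inE /= -(same_connect symf xy). Qed.

Lemma cycle_count_mul j : (cycle_count f j * j)%N = #|[set x | order f x == j]|.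
Proof.
set D := [set x | order f x == j].
set P := [set [set y | fconnect f x y] | x : T & order f x == j].
have partP : partition P D.
  apply/and3P; split.
  - apply/eqP/setP => y; apply/bigcupP/idP => [[A /imsetP[x ox ->]] | oy].
      by rewrite !inE in ox * => /order_fconnect ->.
    exists [set z | fconnect f y z]; last by rewrite inE connect0.
    by apply/imsetP; exists y; rewrite // inE -(inE (mem D)).
  - apply/trivIsetP => A B /imsetP[x _ ->] /imsetP[z _ ->]; apply: contraR.
    case/pred0Pn => y; rewrite !inE => /andP[xy zy].
    have xz : fconnect f x z by rewrite (connect_trans xy) // symf.
    by apply/eqP/setP => u; rewrite !inE (same_connect symf xz).
  - by apply/imsetP => [[x _ /setP/(_ x)]]; rewrite inE connect0 inE.
rewrite (card_partition partP) (eq_bigr (fun _ => j)) ?sum_nat_const //.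
by move=> A /imsetP[x ox ->]; rewrite inE in ox; rewrite cardsE -(eqP ox).
Qed.

Lemma order_dvdn k x : iter k f x = x -> (order f x %| k)%N.
Proof.
move=> fk; have iter_mul q : iter (q * order f x) f x = x.
  by elim: q => // q IH; rewrite mulSn iterD IH iter_order.
have : iter (k %% order f x) f x = x.
  by rewrite -[in RHS]fk {2}(divn_eq k (order f x)) addnC iterD iter_mul.
by move/(congr1 (findex f x)); rewrite findex_iter ?ltn_pmod // findex0 => /eqP.
Qed.

Lemma order_eq1 x : (order f x == 1%N) = (f x == x).
Proof.
apply/eqP/eqP => [o1 | fx]; first by have := iter_order f_inj x; rewrite o1.
by apply/eqP; rewrite -dvdn1; apply: order_dvdn.
Qed.

Lemma CT_prime_order k : prime k -> (forall x, iter k f x = x) ->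
  CT f = [seq if j == 1%N then #|[set x | f x == x]|
              else if j == k then ((#|T| - #|[set x | f x == x]|) %/ k)%N else 0%N
         | j <- iota 1 #|T|].
Proof.
move=> k_pr fk; apply/eq_in_map => j; rewrite mem_iota => /andP[j_gt0 _].
have k_gt1 := prime_gt1 k_pr; have k_gt0 := ltnW k_gt1.
have ord_1k x : (order f x == 1%N) || (order f x == k).
  by case/primeP: k_pr => _; apply; apply: order_dvdn.
have [-> | j_neq1] := eqVneq j 1%N.
  by rewrite -[cycle_count f 1]muln1 cycle_count_mul; apply: eq_card => x; rewrite !inE order_eq1.
have [-> | j_neqk] := eqVneq j k.
  rewrite -(mulnK (cycle_count f k) k_gt0) cycle_count_mul -(cardsC [set x | f x == x]) addKn.
  congr (_ %/ k)%N; apply: eq_card => x; rewrite !inE -order_eq1.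
  by case/orP: (ord_1k x) => /eqP ->; rewrite eqxx ?[1%N == k]eq_sym (gtn_eqF k_gt1).
apply/eqP; rewrite -(eqn_pmul2r j_gt0) mul0n cycle_count_mul cards_eq0; apply/eqP/setP => x.
by rewrite !inE; case/orP: (ord_1k x) => /eqP ->; apply/negbTE; rewrite eq_sym.
Qed.

End CycleType.

Lemma aff_inj p d (M : 'M['F_p]_d) w : M \in unitmx -> injective (aff M w).
Proof. by move=> uM x y /addIr; apply: (can_inj (mulmxK uM)). Qed.

Lemma CT_translation p d (w : 'rV['F_p]_d) : prime p ->
  CT (aff 1%:M w) = [seq if j == 1%N then (if w == 0%R then #|{: 'rV['F_p]_d}| else 0)
                         else if j == p then (if w == 0%R then 0 else #|{: 'rV['F_p]_d}| %/ p)
                         else 0 | j <- iota 1 #|{: 'rV['F_p]_d}|]%N.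
Proof.
move=> p_pr; have iterE n x : iter n (aff 1%:M w) x = x + w *+ n.
  by elim: n => [|n IH]; rewrite ?addr0 // iterS IH /aff mulmx1 mulrSr addrA.
have wp : w *+ p = 0 by apply/matrixP => i j; rewrite mulmxnE mxE (mulrn_pchar (pchar_Fp p_pr)).
rewrite (CT_prime_order (aff_inj (w := w) (unitmx1 _ _)) p_pr) => [|x].
  2: by rewrite iterE wp addr0.
have -> : [set x | aff 1%:M w x == x] = if w == 0 then setT else set0.
  apply/setP => x; rewrite inE /aff mulmx1 -{2}[x]addr0 (inj_eq (addrI x)).
  by case: eqP => _; rewrite !inE.
by apply: eq_map => j; case: (w == 0); rewrite ?cardsT ?cards0 ?subnn ?div0n ?subn0.
Qed.

Lemma CT_order3 (M : 'M['F_2]_2) (w : 'rV['F_2]_2) :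
  M *m M = M + 1%:M -> cglmx M -> CT (aff M w) = [:: 1; 0; 1; 0]%N.
Proof.
move=> MM /andP[uM uM1].
have f3 x : iter 3 (aff M w) x = x.
  rewrite /= /aff !mulmxDl -!mulmxA MM !mulmxDr !mulmx1 MM mulmxDr mulmx1.
  rewrite (addrAC (x *m M) x (x *m M)) addmx_F2 add0r.
  by rewrite -addrA -addrA addmx_F2 addr0.
rewrite (CT_prime_order (aff_inj (w := w) uM) (isT : prime 3) f3).
have -> : #|[set y | aff M w y == y]| = 1%N.
  rewrite (eq_card (B := pred1 (w *m invmx (M + 1%:M)))) ?card1 // => y; rewrite !inE.
  apply/eqP/eqP => [fy | ->].
    rewrite -[y](mulmxK uM1) mulmxDr mulmx1; congr (_ *m _).
    by rewrite -{2}fy /aff addrA addmx_F2 add0r.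
  set y0 := _ *m _; have y0E : y0 *m M + y0 = w by rewrite -{2}[y0]mulmx1 -mulmxDr mulmxKV.
  by rewrite /aff -{1}y0E addrA addmx_F2 add0r.
by rewrite card_mx card_Fp.
Qed.

Lemma CGL_F2_1 (A : 'M['F_2]_1) : A \notin @CGL 2 1.
Proof.
rewrite CGLE /cglmx [A]mx11_scalar -raddfD /= !unitmxE !det_scalar1 !unitfE.
by case: (F2_cases (A 0 0)) => ->.
Qed.

Lemma CGL_F3_1 (A : 'M['F_3]_1) : A \in @CGL 3 1 -> A = 1%:M.
Proof.
rewrite CGLE /cglmx [A]mx11_scalar -raddfD /= !unitmxE !det_scalar1 !unitfE.
by case: (A 0 0) => [[|[|[|//]]] ?] //= _; congr (_%:M); apply: val_inj.
Qed.

Lemma CGLpow_F3_1 l (M : 'M['F_3]_1) : CGLpow l M <-> M = 1%:M.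
Proof.
split=> [[s [_ cs ->]] | ->].
  by elim: s cs => //= A s IH /andP[/CGL_F3_1 -> /IH ->]; rewrite mul1mx.
exists (nseq l 1%:M); split; rewrite ?size_nseq //.
  rewrite all_nseq orbC; apply/orP; left.
  by change (1%:M \in @CGL 3 1); rewrite CGLE /cglmx -raddfD /= !unitmxE !det_scalar1 !unitfE.
by elim: l => //= l <-; rewrite mul1mx.
Qed.

Lemma C2D1E : C2 + 1%:M = nat_mx 2 2 (fun i j => i * j == 0)%N.
Proof.
by apply/matrixP => i j; rewrite !mxE; case: i j => [[|[|//]] ?] [[|[|//]] ?]; apply/eqP.
Qed.

Lemma CGL_F2_2 (A : 'M['F_2]_2) : A \in @CGL 2 2 -> A = C2 \/ A = C2 + 1%:M.
Proof.
pose agree (a b : nat -> nat -> nat) := all (fun ij => a ij.1 ij.2 == b ij.1 ij.2) (positions 2).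
pose P a := cglb 2 2 a ==> agree a (fun i j => i + j != 0)%N || agree a (fun i j => i * j == 0)%N.
have allP : all P (nat_funs (iota 0 2) (positions 2)) by vm_compute.
have [a /implyP cgl_a ->] := nat_mx_cover (isT : prime 2) allP A.
by rewrite C2D1E CGLE nat_mx_cgl // => /cgl_a /orP[] /nat_mx_eq ->; [left | right].
Qed.

Lemma C2D1_mulC2 : (C2 + 1%:M) *m C2 = 1%:M.
Proof. by rewrite mulmxDl C2_sqr mul1mx addrAC addmx_F2 add0r. Qed.

Lemma C2D1_sqr : (C2 + 1%:M) *m (C2 + 1%:M) = C2.
Proof. by rewrite mulmxDl C2_mulC2D1 mul1mx addrCA addmx_F2 addr0. Qed.

Lemma CGLpow_F2_2 l (M : 'M['F_2]_2) : CGLpow l M -> [\/ M = 1%:M, M = C2 | M = C2 + 1%:M].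
Proof.
case=> s [_ cs ->]; elim: s cs => [_ | A s IH /= /andP[/CGL_F2_2 cA /IH cs]]; first exact: Or31.
by case: cA cs => -> [] ->;
  rewrite ?mulmx1 ?C2_sqr ?C2_mulC2D1 ?C2D1_mulC2 ?C2D1_sqr; constructor.
Qed.

Lemma CGLpow_F2_2_C2 l : (0 < l)%N -> CGLpow l C2 /\ CGLpow l (C2 + 1%:M).
Proof.
have cC2 : C2 \in @CGL 2 2 by rewrite CGLE cglmx_C2.
have cC2' : C2 + 1%:M \in @CGL 2 2 by rewrite CGLE cglmx_C2D1.
elim: l => [|[|l] IH] // _; first by split; apply/CGLpow1.
have [pC pC'] := IH isT; split; [rewrite -C2D1_sqr | rewrite -C2_sqr]; exact: CGLpow_cons.
Qed.

Lemma CGLpow_F2_2_1 l : (1 < l)%N -> CGLpow l (1%:M : 'M['F_2]_2).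
Proof.
case: l => // l l_gt1; rewrite -C2_mulC2D1; apply: CGLpow_cons; first by rewrite CGLE cglmx_C2.
by case: (CGLpow_F2_2_C2 l_gt1).
Qed.

Lemma CT_translation_F3_1 (w : 'rV['F_3]_1) :
  CT (aff 1%:M w) = if w == 0 then [:: 3; 0; 0]%N else [:: 0; 0; 1]%N.
Proof. by rewrite CT_translation // card_mx card_Fp //; case: (w == 0). Qed.

Lemma CT_translation_F2_2 (w : 'rV['F_2]_2) :
  CT (aff 1%:M w) = if w == 0 then [:: 4; 0; 0; 0]%N else [:: 0; 2; 0; 0]%N.
Proof. by rewrite CT_translation // card_mx card_Fp //; case: (w == 0). Qed.

Lemma const_mx1_neq0 p n : prime p -> const_mx 1 != 0 :> 'rV['F_p]_n.+1.
Proof. by move=> p_pr; apply/eqP => /matrixP/(_ 0 0)/eqP; rewrite !mxE oner_eq0. Qed.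

Lemma corollary3p3_l1 p d c :
  (exists (A : 'M['F_p]_d) v, A \in @CGL p d /\ c = CT (aff A v)) <->
  exists (M : 'M['F_p]_d) w, CGLpow 1 M /\ c = CT (aff M w).
Proof.
split=> [[A [v [cA ->]]] | [M [w [/CGLpow1 cM ->]]]]; last by exists M, w.
by exists A, v; split => //; apply/CGLpow1.
Qed.

Lemma corollary3p3_F2_1 l c : (0 < l)%N ->
  False <-> exists (M : 'M['F_2]_1) w, CGLpow l M /\ c = CT (aff M w).
Proof.
move=> l_gt0; split=> // [[M [w [[[|A s] [/= sl cs _]] _]]]]; first by rewrite -sl in l_gt0.
by case/andP: cs => cA _; case/negP: (CGL_F2_1 A).
Qed.

Lemma corollary3p3_F3_1 l c :
  c = [:: 3; 0; 0]%N \/ c = [:: 0; 0; 1]%N <->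
  exists (M : 'M['F_3]_1) w, CGLpow l M /\ c = CT (aff M w).
Proof.
split=> [[] -> | [M [w [/CGLpow_F3_1 -> ->]]]].
- by exists 1%:M, 0; rewrite CT_translation_F3_1 eqxx; split => //; apply/CGLpow_F3_1.
- exists 1%:M, (const_mx 1); rewrite CT_translation_F3_1 (negbTE (const_mx1_neq0 _ _)) //.
  by split => //; apply/CGLpow_F3_1.
- by rewrite CT_translation_F3_1; case: (w == 0); [left | right].
Qed.

Lemma corollary3p3_F2_2 l c : (1 < l)%N ->
  [\/ c = [:: 4; 0; 0; 0]%N, c = [:: 0; 2; 0; 0]%N | c = [:: 1; 0; 1; 0]%N] <->
  exists (M : 'M['F_2]_2) w, CGLpow l M /\ c = CT (aff M w).
Proof.
move=> l_gt1; have p1 := CGLpow_F2_2_1 l_gt1.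
have [pC _] := CGLpow_F2_2_C2 (ltnW l_gt1).
split=> [[] -> | [M [w [/CGLpow_F2_2 [] -> ->]]]].
- by exists 1%:M, 0; rewrite CT_translation_F2_2 eqxx.
- by exists 1%:M, (const_mx 1); rewrite CT_translation_F2_2 (negbTE (const_mx1_neq0 _ _)).
- by exists C2, 0; rewrite CT_order3 ?C2_sqr ?cglmx_C2.
- by rewrite CT_translation_F2_2; case: (w == 0); constructor.
- by constructor 3; rewrite CT_order3 ?C2_sqr ?cglmx_C2.
- by constructor 3; rewrite CT_order3 ?C2D1_sqr ?cglmx_C2D1 // -addrA addmx_F2 addr0.
Qed.

Lemma corollary3p3_generic p d l c : (forall K : 'M['F_p]_d, cgl_shift K) -> (1 < l)%N ->
  (exists (M : 'M['F_p]_d) v, M \in unitmx /\ c = CT (aff M v)) <->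
  exists (M : 'M['F_p]_d) w, CGLpow l M /\ c = CT (aff M w).
Proof.
move=> shift l_gt1; split=> [[M [v [uM ->]]] | [M [w [pM ->]]]]; exists M.
  by exists v; split => //; apply: CGLpow_of_unit.
by exists w; split => //; apply: CGLpow_unit pM.
Qed.

Theorem corollary3p3 (p d l : nat) :
  prime p -> (0 < d)%N -> (0 < l)%N ->
  forall c : seq nat,
    Gamma d p l c <->
    exists (M : 'M['F_p]_d) (w : 'rV['F_p]_d), CGLpow l M /\ c = CT (aff M w).
Proof.
move=> p_pr d_gt0 l_gt0 c; rewrite /Gamma.
have [-> /= | l_neq1] := eqVneq l 1%N; first exact: corollary3p3_l1.
have l_gt1 : (1 < l)%N by rewrite ltn_neqAle eq_sym l_neq1.
case: eqP => [[-> ->] | /eqP d12]; first exact: corollary3p3_F2_1.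
case: eqP => [[-> ->] | /eqP d13]; first exact: corollary3p3_F3_1.
case: eqP => [[-> ->] | /eqP d22]; first exact: corollary3p3_F2_2.
exact/corollary3p3_generic/l_gt1/cgl_shift_nonexceptional.
Qed.
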